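(* Let $I_1,\dots,I_n$ be i.i.d. Bernoulli random variables with $\Pr[I_i=1]=p=1-q$, $0<q<1$, let $I_{n+1}=\prod_{j=1}^n(1-I_j)$, and let $P_i=I_i/\sum_{j=1}^{n+1}I_j$ for $i=1,\dots,n+1$. Let $\pi_1,\dots,\pi_{n+1}\ge0$ with $\pi_i>0$ for some $i\le n$, and let $W_i=\big(\sum_{j=1}^{n+1}\pi_j\big)P_i$ for $i=1,\dots,n+1$ (homogeneous tontine with active administrator). Then $E[W_i]=\pi_i$ for all $i=1,\dots,n+1$ if and only if $$\pi_i=\frac1n\sum_{j=1}^n\pi_j\ \ (i=1,\dots,n)\qquad\text{and}\qquad \pi_{n+1}=\frac{q^n}{1-q^n}\sum_{j=1}^n\pi_j,$$ i.e. all participants invest the same amount $\pi$ and $\pi_{n+1}=\frac{nq^n}{1-q^n}\pi$. *)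

From HB Require Import structures.
From mathcomp Require Import all_boot all_order all_algebra.
Set Implicit Arguments. Unset Strict Implicit. Unset Printing Implicit Defensive.
Import Order.TTheory GRing.Theory Num.Theory.
Local Open Scope ring_scope.

(* Sample space: outcomes w : {ffun 'I_n -> bool}, w j = true iff I_{j+1} = 1.
   Indices 1..n+1 of the paper are 'I_n.+1, the administrator (n+1) is ord_max. *)

Section Tontine.
Variables (R : realFieldType) (n : nat).

Definition bern_prob (q : R) (w : {ffun 'I_n -> bool}) : R :=
  \prod_(j < n) (if w j then 1 - q else q).

Definition tind (w : {ffun 'I_n -> bool}) (i : 'I_n.+1) : R :=
  if unlift ord_max i is Some j then (w j)%:R
  else \prod_(j < n) (1 - (w j)%:R).

Definition tshare (w : {ffun 'I_n -> bool}) (i : 'I_n.+1) : R :=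
  tind w i / \sum_(j < n.+1) tind w j.

Definition tpayout (pi : 'I_n.+1 -> R) (w : {ffun 'I_n -> bool}) (i : 'I_n.+1) : R :=
  (\sum_(j < n.+1) pi j) * tshare w i.

Definition expect_payout (q : R) (pi : 'I_n.+1 -> R) (i : 'I_n.+1) : R :=
  \sum_(w : {ffun 'I_n -> bool}) bern_prob q w * tpayout pi w i.

End Tontine.

From HB Require Import structures.
From mathcomp Require Import all_boot all_order all_algebra all_fingroup.
From mathcomp Require Import ring.
Import Order.TTheory GRing.Theory Num.Theory.
Local Open Scope ring_scope.

(* Since E[W_i] = (sum_j pi_j) E[P_i], everything reduces to the expected
   shares E[P_i].  They sum to 1 because the shares of every outcome do (the
   administrator's indicator keeps the denominator positive); the administrator's
   share is his own indicator, of expectation q^n; and the n participants are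
   exchangeable, so each expects (1 - q^n)/n.  The equations E[W_i] = pi_i are
   then a linear system whose solution is the stated one. *)

Lemma sum_lift_ord_max (V : zmodType) (m : nat) (F : 'I_m.+1 -> V) :
  \sum_(j < m.+1 | j != ord_max) F j = \sum_(k < m) F (lift ord_max k).
Proof.
rewrite big_mkcond big_ord_recr /= eqxx addr0; apply: eq_bigr => k _.
have -> : widen_ord (leqnSn m) k = lift ord_max k.
  by apply: val_inj; rewrite /= /bump leqNgt ltn_ord.
by rewrite eq_sym neq_lift.
Qed.

Lemma neq_ord_max_gt0 {m : nat} {i : 'I_m.+1} : i != ord_max -> (0 < m)%N.
Proof.
case: (unliftP ord_max i) => [k _ _ | -> /eqP //].
exact: leq_ltn_trans (leq0n k) (ltn_ord k).
Qed.

Section ExpectedShares.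
Variables (R : realFieldType) (n : nat).
Implicit Types (q : R) (w : {ffun 'I_n -> bool}) (s : {perm 'I_n}).

Definition expect_share q (i : 'I_n.+1) : R :=
  \sum_(w : {ffun 'I_n -> bool}) bern_prob q w * tshare R w i.

Lemma expect_payoutE q (pi : 'I_n.+1 -> R) i :
  expect_payout q pi i = (\sum_(j < n.+1) pi j) * expect_share q i.
Proof.
rewrite /expect_payout /expect_share mulr_sumr.
by apply: eq_bigr => w _; rewrite /tpayout mulrCA.
Qed.

Lemma sum_bern_prob q : \sum_(w : {ffun 'I_n -> bool}) bern_prob q w = 1.
Proof.
rewrite /bern_prob -(bigA_distr_bigA (fun _ (b : bool) => if b then 1 - q else q)).
by rewrite big1 // => j _; rewrite big_bool /= subrK.
Qed.

Lemma tind_lift w (k : 'I_n) : tind R w (lift ord_max k) = (w k)%:R.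
Proof. by rewrite /tind liftK. Qed.

Lemma tind_max w : tind R w ord_max = (~~ [exists k, w k])%:R.
Proof.
rewrite /tind unlift_none.
case: (boolP [exists k, w k]) => [/existsP [k wk] | /existsPn wF] /=.
  by rewrite (bigD1 k) //= wk subrr mul0r.
by rewrite big1 // => k _; rewrite (negbTE (wF k)) subr0.
Qed.

Lemma sum_tind w :
  \sum_(j < n.+1) tind R w j = \sum_(k < n) (w k)%:R + (~~ [exists k, w k])%:R.
Proof.
rewrite (bigD1 ord_max) //= addrC sum_lift_ord_max tind_max.
by congr (_ + _); apply: eq_bigr => k _; rewrite tind_lift.
Qed.

Lemma sum_tind_gt0 w : 0 < \sum_(j < n.+1) tind R w j.
Proof.
rewrite sum_tind.
case: (boolP [exists k, w k]) => [/existsP [k wk] | /existsPn wF] /=.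
  by rewrite addr0 (bigD1 k) //= wk ltr_pwDl // sumr_ge0.
by rewrite big1 ?add0r ?ltr01 // => k _; rewrite (negbTE (wF k)).
Qed.

Lemma sum_tshare w : \sum_(i < n.+1) tshare R w i = 1.
Proof. by rewrite -mulr_suml divff // gt_eqF ?sum_tind_gt0. Qed.

Lemma sum_expect_share q : \sum_(i < n.+1) expect_share q i = 1.
Proof.
rewrite /expect_share exchange_big /= -(sum_bern_prob q).
by apply: eq_bigr => w _; rewrite -mulr_sumr sum_tshare mulr1.
Qed.

Lemma tshare_max w : tshare R w ord_max = tind R w ord_max.
Proof.
rewrite /tshare sum_tind tind_max.
case: (boolP [exists k, w k]) => [_ | /existsPn wF] /=.
  by rewrite mul0r.
by rewrite big1 ?add0r ?invr1 ?mulr1 // => k _; rewrite (negbTE (wF k)).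
Qed.

Lemma expect_share_max q : expect_share q ord_max = q ^+ n.
Proof.
have Eterm w : bern_prob q w * tshare R w ord_max
               = \prod_(j < n) (if w j then 0 else q).
  rewrite tshare_max /tind unlift_none /bern_prob -big_split /=.
  by apply: eq_bigr => j _; case: (w j); rewrite ?subrr ?mulr0 ?subr0 ?mulr1.
rewrite /expect_share (eq_bigr _ (fun w _ => Eterm w)).
rewrite -(bigA_distr_bigA (fun _ (b : bool) => if b then 0 else q)).
rewrite -[in RHS](card_ord n) -prodr_const; apply: eq_bigr => j _.
by rewrite big_bool; apply: add0r.
Qed.

Definition permute_outcome (s : {perm 'I_n}) w : {ffun 'I_n -> bool} :=
  [ffun k => w (s k)].

Lemma bern_prob_permute q s w : bern_prob q (permute_outcome s w) = bern_prob q w.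
Proof.
rewrite /bern_prob (reindex_inj (@perm_inj _ (s^-1)%g)).
by apply: eq_bigr => k _; rewrite ffunE permKV.
Qed.

Lemma tshare_permute s w (k : 'I_n) :
  tshare R (permute_outcome s w) (lift ord_max k) = tshare R w (lift ord_max (s k)).
Proof.
have Esum : \sum_(j < n.+1) tind R (permute_outcome s w) j = \sum_(j < n.+1) tind R w j.
  rewrite !sum_tind (reindex_inj (@perm_inj _ (s^-1)%g)); congr (_ + (~~ _)%:R).
    by apply: eq_bigr => j _; rewrite ffunE permKV.
  apply/existsP/existsP => -[j]; rewrite ?ffunE => wj;
    [exists (s j) | exists ((s^-1)%g j)]; by rewrite ?ffunE ?permKV.
by rewrite /tshare Esum !tind_lift ffunE.
Qed.

Lemma expect_share_perm q s (k : 'I_n) :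
  expect_share q (lift ord_max (s k)) = expect_share q (lift ord_max k).
Proof.
have permuteK : cancel (permute_outcome s) (permute_outcome (s^-1)%g).
  by move=> w; apply/ffunP => j; rewrite !ffunE permKV.
rewrite /expect_share [RHS](reindex_inj (can_inj permuteK)) /=.
by apply: eq_bigr => w _; rewrite bern_prob_permute tshare_permute.
Qed.

Lemma expect_share_participant q (i : 'I_n.+1) :
  i != ord_max -> expect_share q i = (1 - q ^+ n) / n%:R.
Proof.
move=> i_participant; have n_gt0 := neq_ord_max_gt0 i_participant.
move: i_participant; case: (unliftP ord_max i) => [k -> _ | -> /eqP //].
have Eall (j : 'I_n) : expect_share q (lift ord_max j) = expect_share q (lift ord_max k).
  by rewrite -(expect_share_perm q (tperm k j)) tpermR.
have := sum_expect_share q.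
rewrite (bigD1 ord_max) //= sum_lift_ord_max expect_share_max.
rewrite (eq_bigr _ (fun j _ => Eall j)) sumr_const card_ord addrC.
move=> /(canRL (addrK _)) <-.
by rewrite -[X in X / _]mulr_natr mulfK // pnatr_eq0 -lt0n.
Qed.

Lemma expect_payout_fixpointE q (pi : 'I_n.+1 -> R) :
  (forall i, expect_payout q pi i = pi i) <->
  (forall i, i != ord_max -> pi i = (\sum_(j < n.+1) pi j) * ((1 - q ^+ n) / n%:R))
  /\ pi ord_max = (\sum_(j < n.+1) pi j) * q ^+ n.
Proof.
split=> [fixpoint | [Epart Emax] i].
  split=> [i /expect_share_participant <- |];
    by rewrite -fixpoint expect_payoutE ?expect_share_max.
rewrite expect_payoutE; case: (eqVneq i ord_max) => [-> | i_participant].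
  by rewrite expect_share_max.
by rewrite expect_share_participant // Epart.
Qed.

End ExpectedShares.

Lemma fair_contributions_iff (F : fieldType) (n : nat) (b : F) (pi : 'I_n.+1 -> F) :
  n%:R != 0 :> F -> b != 1 ->
  let T := \sum_(j < n.+1 | j != ord_max) pi j in
  (forall i, i != ord_max -> pi i = (\sum_(j < n.+1) pi j) * ((1 - b) / n%:R))
  /\ pi ord_max = (\sum_(j < n.+1) pi j) * b <->
  (forall i, i != ord_max -> pi i = n%:R^-1 * T) /\ pi ord_max = b / (1 - b) * T.
Proof.
move=> n_neq0 b_neq1 T.
have b1_neq0 : 1 - b != 0 by rewrite subr_eq0 eq_sym.
have -> : \sum_(j < n.+1) pi j = T + pi ord_max by rewrite (bigD1 ord_max) //= addrC.
split=> [[Epart Emax] | [Epart Emax]].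
  have T_fix : T = (T + pi ord_max) * (1 - b).
    have lift_neq_max (k : 'I_n) : lift ord_max k != ord_max by rewrite eq_sym neq_lift.
    rewrite [in LHS]/T sum_lift_ord_max (eq_bigr _ (fun k _ => Epart _ (lift_neq_max k))).
    by rewrite sumr_const card_ord -mulr_natr; field.
  split=> [i i_participant |]; first by rewrite Epart // [in RHS]T_fix; field.
  by rewrite [in RHS]T_fix {1}Emax; field.
split=> [i i_participant |]; last by rewrite Emax; field.
by rewrite Epart // Emax; field; rewrite n_neq0.
Qed.

Theorem mainTheorem12 (R : realFieldType) (n : nat) (q : R)
    (pi : 'I_n.+1 -> R) :
  0 < q -> q < 1 ->
  (forall i, 0 <= pi i) ->
  (exists i : 'I_n.+1, i != ord_max /\ 0 < pi i) ->
  ((forall i : 'I_n.+1, expect_payout q pi i = pi i) <->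
   ((forall i : 'I_n.+1, i != ord_max ->
       pi i = n%:R^-1 * \sum_(j < n.+1 | j != ord_max) pi j) /\
    pi ord_max = q ^+ n / (1 - q ^+ n) * \sum_(j < n.+1 | j != ord_max) pi j)).
Proof.
move=> q_gt0 q_lt1 _ [i0 [i0_participant _]].
have n_gt0 := neq_ord_max_gt0 i0_participant.
have qn_neq1 : q ^+ n != 1 by rewrite lt_eqF // exprn_ilt1 ?ltW // -lt0n.
rewrite expect_payout_fixpointE; apply: fair_contributions_iff qn_neq1.
by rewrite pnatr_eq0 -lt0n.
Qed.
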